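(* Let $T=\left[\begin{smallmatrix} R & M\\ N & S\end{smallmatrix}\right]$ and $T'=\left[\begin{smallmatrix} R' & M'\\ N' & S'\end{smallmatrix}\right]$ be Morita context rings with $R,S,R',S'$ indecomposable, and suppose the Morita context with which $T$ (or $T'$) is associated is strict. Then $\mathrm{Iso}_g(T,T')=\mathrm{Iso}_0(T,T')$.
   Context: All rings have an identity $1\neq 0$; a ring is indecomposable if its only central idempotents are $0$ and $1$. A Morita context $(R,S,M,N,f,g)$: rings $R,S$, an $R$-$S$-bimodule $M$, an $S$-$R$-bimodule $N$, bimodule morphisms $f:M\otimes_SN\to R$, $g:N\otimes_RM\to S$, with $[m,n]=f(m\otimes n)$, $(n,m)=g(n\otimes m)$ satisfying $[m,n]m'=m(n,m')$ and $n[m,n']=(n,m)n'$; it is strict if $f$ and $g$ are surjective. Its Morita context ring $T$ consists of formal matrices $\left[\begin{smallmatrix} r & m\\ n & s\end{smallmatrix}\right]$ with entrywise addition and product $\left[\begin{smallmatrix} r & m\\ n & s\end{smallmatrix}\right]\left[\begin{smallmatrix} r' & m'\\ n' & s'\end{smallmatrix}\right]=\left[\begin{smallmatrix} rr'+[m,n'] & rm'+ms'\\ nr'+sn' & (n,m')+ss'\end{smallmatrix}\right]$; similarly for $T'$. Grading: $T_{-1}=\left[\begin{smallmatrix} 0 & 0\\ N & 0\end{smallmatrix}\right]$, $T_0=\left[\begin{smallmatrix} R & 0\\ 0 & S\end{smallmatrix}\right]$, $T_1=\left[\begin{smallmatrix} 0 & M\\ 0 & 0\end{smallmatrix}\right]$,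 $T_i=0$ otherwise. $\mathrm{Iso}_g(T,T')$ is the set of ring isomorphisms $\phi:T\to T'$ that are graded ($\phi(T_i)\subseteq T'_i$ for all $i$) or anti-graded ($\phi(T_i)\subseteq T'_{-i}$ for all $i$). $\mathrm{Iso}_0(T,T')=\mathrm{Iso}_0^0(T,T')\cup\mathrm{Iso}_0^1(T,T')$, where $\mathrm{Iso}_0^0(T,T')$ is the set of maps $\phi\left(\left[\begin{smallmatrix} r & m\\ n & s\end{smallmatrix}\right]\right)=\left[\begin{smallmatrix}\gamma(r) & \gamma(r)m'_0-m'_0\delta(s)+u(m)\\ n'_0\gamma(r)-\delta(s)n'_0+v(n) & \delta(s)\end{smallmatrix}\right]$ with $\gamma:R\to R'$, $\delta:S\to S'$ ring isomorphisms, $u:M\to M'$, $v:N\to N'$ additive bijections with $u(rms)=\gamma(r)u(m)\delta(s)$, $v(snr)=\delta(s)v(n)\gamma(r)$, and $m'_0\in M'$, $n'_0\in N'$ with $[m'_0,N']=0$, $(N',m'_0)=0$, $[M',n'_0]=0$, $(n'_0,M')=0$, $[u(m),v(n)]=\gamma([m,n])$, $(v(n),u(m))=\delta((n,m))$; and $\mathrm{Iso}_0^1(T,T')$ is the set of maps $\psi\left(\left[\begin{smallmatrix} r & m\\ n & s\end{smallmatrix}\right]\right)=\left[\begin{smallmatrix}\sigma(s) & m'_*\rho(r)-\sigma(s)m'_*+\nu(n)\\ \rho(r)n'_*-n'_*\sigma(s)+\mu(m) & \rho(r)\end{smallmatrix}\right]$ with $\rho:R\to S'$, $\sigma:S\to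 R'$ ring isomorphisms, $\mu:M\to N'$, $\nu:N\to M'$ additive bijections with $\mu(rms)=\rho(r)\mu(m)\sigma(s)$, $\nu(snr)=\sigma(s)\nu(n)\rho(r)$, and $m'_*\in M'$, $n'_*\in N'$ with $[m'_*,N']=0$, $(N',m'_* )=0$, $[M',n'_*]=0$, $(n'_*,M')=0$, $(\mu(m),\nu(n))=\rho([m,n])$, $[\nu(n),\mu(m)]=\sigma((n,m))$. *)

From HB Require Import structures.
From mathcomp Require Import all_boot all_order all_algebra.
Set Implicit Arguments. Unset Strict Implicit. Unset Printing Implicit Defensive.
Import Order.TTheory GRing.Theory Num.Theory.
Local Open Scope ring_scope.

(* A Morita context (R,S,M,N,f,g): M is an R-S-bimodule, N an S-R-bimodule,
   [m,n] = f(m (x) n) and (n,m) = g(n (x) m).  A bimodule map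
   f : M (x)_S N -> R is the same as an S-balanced biadditive map
   M x N -> R which is R-linear on the left and R-linear on the right. *)
Record morita_context := MoritaContext {
  mcR : nzRingType; mcS : nzRingType; mcM : zmodType; mcN : zmodType;
  lM : mcR -> mcM -> mcM;
  rM : mcM -> mcS -> mcM;
  lN : mcS -> mcN -> mcN;
  rN : mcN -> mcR -> mcN;
  brk : mcM -> mcN -> mcR;
  par : mcN -> mcM -> mcS;
  lM_addl : forall r1 r2 m, lM (r1 + r2) m = lM r1 m + lM r2 m;
  lM_addr : forall r m1 m2, lM r (m1 + m2) = lM r m1 + lM r m2;
  lM_mul : forall r1 r2 m, lM (r1 * r2) m = lM r1 (lM r2 m);
  lM_one : forall m, lM 1 m = m;
  rM_addl : forall m1 m2 s, rM (m1 + m2) s = rM m1 s + rM m2 s;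
  rM_addr : forall m s1 s2, rM m (s1 + s2) = rM m s1 + rM m s2;
  rM_mul : forall m s1 s2, rM m (s1 * s2) = rM (rM m s1) s2;
  rM_one : forall m, rM m 1 = m;
  lrM : forall r m s, rM (lM r m) s = lM r (rM m s);
  lN_addl : forall s1 s2 n, lN (s1 + s2) n = lN s1 n + lN s2 n;
  lN_addr : forall s n1 n2, lN s (n1 + n2) = lN s n1 + lN s n2;
  lN_mul : forall s1 s2 n, lN (s1 * s2) n = lN s1 (lN s2 n);
  lN_one : forall n, lN 1 n = n;
  rN_addl : forall n1 n2 r, rN (n1 + n2) r = rN n1 r + rN n2 r;
  rN_addr : forall n r1 r2, rN n (r1 + r2) = rN n r1 + rN n r2;
  rN_mul : forall n r1 r2, rN n (r1 * r2) = rN (rN n r1) r2;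
  rN_one : forall n, rN n 1 = n;
  lrN : forall s n r, rN (lN s n) r = lN s (rN n r);
  brk_addl : forall m1 m2 n, brk (m1 + m2) n = brk m1 n + brk m2 n;
  brk_addr : forall m n1 n2, brk m (n1 + n2) = brk m n1 + brk m n2;
  brk_bal : forall m s n, brk (rM m s) n = brk m (lN s n);
  brk_lin_l : forall r m n, brk (lM r m) n = r * brk m n;
  brk_lin_r : forall m n r, brk m (rN n r) = brk m n * r;
  par_addl : forall n1 n2 m, par (n1 + n2) m = par n1 m + par n2 m;
  par_addr : forall n m1 m2, par n (m1 + m2) = par n m1 + par n m2;
  par_bal : forall n r m, par (rN n r) m = par n (lM r m);
  par_lin_l : forall s n m, par (lN s n) m = s * par n m;
  par_lin_r : forall n m s, par n (rM m s) = par n m * s;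
  mc_assoc1 : forall m n m', lM (brk m n) m' = rM m (par n m');
  mc_assoc2 : forall n m n', rN n (brk m n') = lN (par n m) n'
}.

(* Strictness: f and g surjective.  Elements of M (x)_S N are finite sums of
   simple tensors, so surjectivity of f means every r is a finite sum of
   brackets [m_i, n_i]. *)
Definition strict (C : morita_context) : Prop :=
  (forall r : mcR C, exists k (m : 'I_k -> mcM C) (n : 'I_k -> mcN C),
      r = \sum_(i < k) brk (m i) (n i)) /\
  (forall s : mcS C, exists k (n : 'I_k -> mcN C) (m : 'I_k -> mcM C),
      s = \sum_(i < k) par (n i) (m i)).

Definition indecomposable (R : nzRingType) : Prop :=
  forall e : R, e * e = e -> (forall x : R, e * x = x * e) -> e = 0 \/ e = 1.

(* The Morita context ring T: formal matrices [[r, m], [n, s]]. *)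
Record mc_elt (C : morita_context) := MkElt
  { er : mcR C; em : mcM C; en : mcN C; es : mcS C }.

Definition mc_zero (C : morita_context) : mc_elt C := MkElt 0 0 0 0.
Definition mc_one (C : morita_context) : mc_elt C := MkElt 1 0 0 1.
Definition mc_add (C : morita_context) (x y : mc_elt C) : mc_elt C :=
  MkElt (er x + er y) (em x + em y) (en x + en y) (es x + es y).
Definition mc_mul (C : morita_context) (x y : mc_elt C) : mc_elt C :=
  MkElt (er x * er y + brk (em x) (en y))
        (lM (er x) (em y) + rM (em x) (es y))
        (rN (en x) (er y) + lN (es x) (en y))
        (par (en x) (em y) + es x * es y).

Definition mc_ring_iso (C C' : morita_context) (phi : mc_elt C -> mc_elt C') :=
  bijective phi /\
  (forall x y, phi (mc_add x y) = mc_add (phi x) (phi y)) /\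
  (forall x y, phi (mc_mul x y) = mc_mul (phi x) (phi y)) /\
  phi (mc_one C) = mc_one C'.

Definition mc_hom (C : morita_context) (i : int) (x : mc_elt C) : Prop :=
  if i == 0 then em x = 0 /\ en x = 0
  else if i == 1 then er x = 0 /\ en x = 0 /\ es x = 0
  else if i == -1 then er x = 0 /\ em x = 0 /\ es x = 0
  else x = mc_zero C.

Definition graded (C C' : morita_context) (phi : mc_elt C -> mc_elt C') :=
  forall (i : int) x, mc_hom i x -> mc_hom i (phi x).
Definition antigraded (C C' : morita_context) (phi : mc_elt C -> mc_elt C') :=
  forall (i : int) x, mc_hom i x -> mc_hom (- i) (phi x).

Definition Iso_g (C C' : morita_context) (phi : mc_elt C -> mc_elt C') :=
  mc_ring_iso phi /\ (graded phi \/ antigraded phi).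

Definition ring_iso (R R' : nzRingType) (f : R -> R') :=
  bijective f /\ (forall x y, f (x + y) = f x + f y) /\
  (forall x y, f (x * y) = f x * f y) /\ f 1 = 1.
Definition add_bij (A B : zmodType) (f : A -> B) :=
  bijective f /\ (forall x y, f (x + y) = f x + f y).

Definition Iso_0_0 (C C' : morita_context) (phi : mc_elt C -> mc_elt C') :=
  exists (gam : mcR C -> mcR C') (del : mcS C -> mcS C')
         (u : mcM C -> mcM C') (v : mcN C -> mcN C')
         (m0 : mcM C') (n0 : mcN C'),
  ring_iso gam /\ ring_iso del /\ add_bij u /\ add_bij v /\
      (forall r m s, u (rM (lM r m) s) = lM (gam r) (rM (u m) (del s))) /\
      (forall s n r, v (rN (lN s n) r) = lN (del s) (rN (v n) (gam r))) /\
      (forall n' : mcN C', brk m0 n' = 0) /\ (forall n' : mcN C', par n' m0 = 0) /\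
      (forall m' : mcM C', brk m' n0 = 0) /\ (forall m' : mcM C', par n0 m' = 0) /\
      (forall m n, brk (u m) (v n) = gam (brk m n)) /\
      (forall m n, par (v n) (u m) = del (par n m)) /\
      (forall x, phi x =
         MkElt (gam (er x))
               (lM (gam (er x)) m0 - rM m0 (del (es x)) + u (em x))
               (rN n0 (gam (er x)) - lN (del (es x)) n0 + v (en x))
               (del (es x))).

Definition Iso_0_1 (C C' : morita_context) (psi : mc_elt C -> mc_elt C') :=
  exists (rho : mcR C -> mcS C') (sig : mcS C -> mcR C')
         (mu : mcM C -> mcN C') (nu : mcN C -> mcM C')
         (ms : mcM C') (ns : mcN C'),
  ring_iso rho /\ ring_iso sig /\ add_bij mu /\ add_bij nu /\
      (forall r m s, mu (rM (lM r m) s) = lN (rho r) (rN (mu m) (sig s))) /\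
      (forall s n r, nu (rN (lN s n) r) = lM (sig s) (rM (nu n) (rho r))) /\
      (forall n' : mcN C', brk ms n' = 0) /\ (forall n' : mcN C', par n' ms = 0) /\
      (forall m' : mcM C', brk m' ns = 0) /\ (forall m' : mcM C', par ns m' = 0) /\
      (forall m n, par (mu m) (nu n) = rho (brk m n)) /\
      (forall m n, brk (nu n) (mu m) = sig (par n m)) /\
      (forall x, psi x =
         MkElt (sig (es x))
               (rM ms (rho (er x)) - lM (sig (es x)) ms + nu (en x))
               (lN (rho (er x)) ns - rN ns (sig (es x)) + mu (em x))
               (rho (er x))).

Definition Iso_0 (C C' : morita_context) (phi : mc_elt C -> mc_elt C') :=
  Iso_0_0 phi \/ Iso_0_1 phi.

From mathcomp Require Import all_boot all_order all_algebra.
Set Implicit Arguments. Unset Strict Implicit. Unset Printing Implicit Defensive.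
Import GRing.Theory.
Local Open Scope ring_scope.

(* Write e11, e22 for the diagonal matrix units of a Morita context ring T.
   1. "Diagonal" maps x |-> [[gam r, u m], [v n, del s]] are exactly the
      maps of Iso_0^0 with m'_0 = n'_0 = 0; such a map is a graded ring
      isomorphism iff (gam, del, u, v) is a compatible family of
      isomorphisms (diag_data).  A ring isomorphism with phi e11 = e11'
      is diagonal, since it preserves the four Peirce corners.
   2. Under strictness, the elements m'_0, n'_0 in Iso_0^0 annihilate
      enough brackets to vanish, so Iso_0^0 consists of diagonal maps.
   3. A graded or anti-graded isomorphism maps e11 to a diagonal
      idempotent [[a,0],[0,b]] with a, b central; indecomposability of
      R', S' forces phi e11 = e11' or phi e11 = e22'.
   4. Transposing the target context (R',S',M',N') into (S',R',N',M')
      swaps e11' and e22', exchanges graded and anti-graded maps and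
      turns Iso_0^1 into Iso_0^0, so the second case reduces to the first. *)

Lemma addr_absorb0 (A : zmodType) (x y : A) : x + y = x -> y = 0.
Proof. by move=> h; apply: (addrI x); rewrite addr0. Qed.

Lemma additive_map0 (A B : zmodType) (f : A -> B) :
  (forall x y, f (x + y) = f x + f y) -> f 0 = 0.
Proof. by move=> fD; apply: (@addr_absorb0 _ (f 0)); rewrite -fD addr0. Qed.

Lemma ring_iso0 (R R' : nzRingType) (f : R -> R') : ring_iso f -> f 0 = 0.
Proof. by case=> _ [fD _]; apply: additive_map0. Qed.

Section ContextZeros.
Variable C : morita_context.

Lemma brk0l (n : mcN C) : brk 0 n = 0.
Proof. by apply: (@additive_map0 _ _ (fun m => brk m n)) => x y; rewrite brk_addl. Qed.
Lemma brk0r (m : mcM C) : brk m 0 = 0.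
Proof. by apply: (@additive_map0 _ _ (brk m)) => x y; rewrite brk_addr. Qed.
Lemma par0l (m : mcM C) : par 0 m = 0.
Proof. by apply: (@additive_map0 _ _ (fun a => par a m)) => x y; rewrite par_addl. Qed.
Lemma par0r (n : mcN C) : par n 0 = 0.
Proof. by apply: (@additive_map0 _ _ (par n)) => x y; rewrite par_addr. Qed.
Lemma lM0l (m : mcM C) : lM 0 m = 0.
Proof. by apply: (@additive_map0 _ _ (fun a => lM a m)) => x y; rewrite lM_addl. Qed.
Lemma lM0r (r : mcR C) : lM r 0 = 0.
Proof. by apply: (@additive_map0 _ _ (lM r)) => x y; rewrite lM_addr. Qed.
Lemma rM0l (s : mcS C) : rM 0 s = 0.
Proof. by apply: (@additive_map0 _ _ (fun a => rM a s)) => x y; rewrite rM_addl. Qed.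
Lemma rM0r (m : mcM C) : rM m 0 = 0.
Proof. by apply: (@additive_map0 _ _ (rM m)) => x y; rewrite rM_addr. Qed.
Lemma lN0l (n : mcN C) : lN 0 n = 0.
Proof. by apply: (@additive_map0 _ _ (fun a => lN a n)) => x y; rewrite lN_addl. Qed.
Lemma lN0r (s : mcS C) : lN s 0 = 0.
Proof. by apply: (@additive_map0 _ _ (lN s)) => x y; rewrite lN_addr. Qed.
Lemma rN0l (r : mcR C) : rN 0 r = 0.
Proof. by apply: (@additive_map0 _ _ (fun a => rN a r)) => x y; rewrite rN_addl. Qed.
Lemma rN0r (n : mcN C) : rN n 0 = 0.
Proof. by apply: (@additive_map0 _ _ (rN n)) => x y; rewrite rN_addr. Qed.

End ContextZeros.

Definition zeroE := (brk0l, brk0r, par0l, par0r, lM0l, lM0r, rM0l, rM0r,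
  lN0l, lN0r, rN0l, rN0r, lM_one, rM_one, lN_one, rN_one,
  mulr0, mul0r, mulr1, mul1r, addr0, add0r, oppr0).

Definition e11 (C : morita_context) : mc_elt C := MkElt 1 0 0 0.
Definition e22 (C : morita_context) : mc_elt C := MkElt 0 0 0 1.

Section PeirceCorners.
Variable C : morita_context.
Implicit Types x : mc_elt C.

Lemma e11_add_e22 : mc_add (e11 C) (e22 C) = mc_one C.
Proof. by rewrite /mc_add /= !zeroE. Qed.

Lemma e11_idem : mc_mul (e11 C) (e11 C) = e11 C.
Proof. by rewrite /mc_mul /= !zeroE. Qed.

Lemma corner11 x : mc_mul (mc_mul (e11 C) x) (e11 C) = MkElt (er x) 0 0 0.
Proof. by case: x => r m n s; rewrite /mc_mul /= !zeroE. Qed.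
Lemma corner12 x : mc_mul (mc_mul (e11 C) x) (e22 C) = MkElt 0 (em x) 0 0.
Proof. by case: x => r m n s; rewrite /mc_mul /= !zeroE. Qed.
Lemma corner21 x : mc_mul (mc_mul (e22 C) x) (e11 C) = MkElt 0 0 (en x) 0.
Proof. by case: x => r m n s; rewrite /mc_mul /= !zeroE. Qed.
Lemma corner22 x : mc_mul (mc_mul (e22 C) x) (e22 C) = MkElt 0 0 0 (es x).
Proof. by case: x => r m n s; rewrite /mc_mul /= !zeroE. Qed.

End PeirceCorners.

Section RingIsomorphisms.
Variables (C C' : morita_context) (phi : mc_elt C -> mc_elt C').
Hypothesis phi_iso : mc_ring_iso phi.

Lemma mc_iso_inj : injective phi.
Proof. by case: phi_iso => /bij_inj. Qed.

Lemma mc_iso_zero : phi (mc_zero C) = mc_zero C'.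
Proof.
have [_ [phiD _]] := phi_iso.
have := phiD (mc_zero C) (mc_zero C).
have -> : mc_add (mc_zero C) (mc_zero C) = mc_zero C by rewrite /mc_add /= !addr0.
case: (phi (mc_zero C)) => r m n s; rewrite /mc_add /=.
by case=> /esym/addr_absorb0 -> /esym/addr_absorb0 -> /esym/addr_absorb0 ->
  /esym/addr_absorb0 ->.
Qed.

(* Since e11 + e22 = 1, fixing e11 forces fixing e22. *)
Lemma mc_iso_e22 : phi (e11 C) = e11 C' -> phi (e22 C) = e22 C'.
Proof.
have [_ [phiD [_ phi1]]] := phi_iso => phi_e11.
have := phiD (e11 C) (e22 C); rewrite e11_add_e22 phi1 phi_e11.
case: (phi (e22 C)) => r m n s; rewrite /mc_add /= !add0r.
by case=> /esym/addr_absorb0 -> <- <- <-.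
Qed.

End RingIsomorphisms.

Definition diag_map (C C' : morita_context)
    (gam : mcR C -> mcR C') (del : mcS C -> mcS C')
    (u : mcM C -> mcM C') (v : mcN C -> mcN C') (x : mc_elt C) : mc_elt C' :=
  MkElt (gam (er x)) (u (em x)) (v (en x)) (del (es x)).

Definition diag_data (C C' : morita_context)
    (gam : mcR C -> mcR C') (del : mcS C -> mcS C')
    (u : mcM C -> mcM C') (v : mcN C -> mcN C') : Prop :=
  ring_iso gam /\ ring_iso del /\ add_bij u /\ add_bij v /\
  (forall r m s, u (rM (lM r m) s) = lM (gam r) (rM (u m) (del s))) /\
  (forall s n r, v (rN (lN s n) r) = lN (del s) (rN (v n) (gam r))) /\
  (forall m n, brk (u m) (v n) = gam (brk m n)) /\
  (forall m n, par (v n) (u m) = del (par n m)).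

Section DiagonalMaps.
Variables (C C' : morita_context).
Variables (gam : mcR C -> mcR C') (del : mcS C -> mcS C').
Variables (u : mcM C -> mcM C') (v : mcN C -> mcN C').

Lemma diag_map_bij : gam 0 = 0 -> del 0 = 0 -> u 0 = 0 -> v 0 = 0 ->
  bijective (diag_map gam del u v) <->
  [/\ bijective gam, bijective del, bijective u & bijective v].
Proof.
move=> g0 d0 u0 v0.
split=> [[h hK Kh] | [[gi gK Kg] [di dK Kd] [ui uK Ku] [vi vK Kv]]].
  split.
  - exists (fun r => er (h (MkElt r 0 0 0))) => r.
      by have := hK (MkElt r 0 0 0); rewrite {1}/diag_map /= u0 v0 d0 => ->.
    exact: (congr1 (@er _) (Kh (MkElt r 0 0 0))).
  - exists (fun s => es (h (MkElt 0 0 0 s))) => s.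
      by have := hK (MkElt 0 0 0 s); rewrite {1}/diag_map /= g0 u0 v0 => ->.
    exact: (congr1 (@es _) (Kh (MkElt 0 0 0 s))).
  - exists (fun m => em (h (MkElt 0 m 0 0))) => m.
      by have := hK (MkElt 0 m 0 0); rewrite {1}/diag_map /= g0 v0 d0 => ->.
    exact: (congr1 (@em _) (Kh (MkElt 0 m 0 0))).
  - exists (fun n => en (h (MkElt 0 0 n 0))) => n.
      by have := hK (MkElt 0 0 n 0); rewrite {1}/diag_map /= g0 u0 d0 => ->.
    exact: (congr1 (@en _) (Kh (MkElt 0 0 n 0))).
by exists (diag_map gi di ui vi) => -[r m n s]; rewrite /diag_map /= ?gK ?dK ?uK ?vK
  ?Kg ?Kd ?Ku ?Kv.
Qed.

Variable phi : mc_elt C -> mc_elt C'.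
Hypothesis phi_diag : phi =1 diag_map gam del u v.

Lemma diag_map_Iso_g : diag_data gam del u v -> Iso_g phi.
Proof.
move=> [[gb [gD [gM g1]]] [[db [dD [dM d1]]] [[ub uD] [[vb vD] [hu [hv [hb hp]]]]]]].
have g0 := additive_map0 gD; have d0 := additive_map0 dD.
have u0 := additive_map0 uD; have v0 := additive_map0 vD.
have uL r m : u (lM r m) = lM (gam r) (u m) by rewrite -[lM r m]rM_one hu d1 rM_one.
have uR m s : u (rM m s) = rM (u m) (del s) by rewrite -{1}[m]lM_one hu g1 lM_one.
have vL s n : v (lN s n) = lN (del s) (v n) by rewrite -[lN s n]rN_one hv g1 rN_one.
have vR n r : v (rN n r) = rN (v n) (gam r) by rewrite -{1}[n]lN_one hv d1 lN_one.
split; last first.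
  left=> i x; rewrite /mc_hom phi_diag /diag_map /=.
  case: (i == 0); first by case=> -> ->.
  case: (i == 1); first by case=> -> [-> ->].
  case: (i == -1); first by case=> -> [-> ->].
  by move=> ->; rewrite /= g0 d0 u0 v0.
split; first by apply: eq_bij (fsym phi_diag); apply/diag_map_bij.
split; first by case=> ? ? ? ? [? ? ? ?]; rewrite !phi_diag /diag_map /= gD dD uD vD.
split; last by rewrite phi_diag /diag_map /= g1 d1 u0 v0.
case=> r m n s [r' m' n' s']; rewrite !phi_diag /diag_map /mc_mul /=.
by rewrite gD gM hb uD uL uR vD vR vL dD dM hp.
Qed.

(* Conversely, every diagonal ring isomorphism comes from compatible data:
   each identity is read off on matrices with a single nonzero entry. *)
Lemma diag_data_of_ring_iso : mc_ring_iso phi -> diag_data gam del u v.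
Proof.
move=> [phib [phiD [phiM phi1]]].
have gD r r' : gam (r + r') = gam r + gam r'.
  by have := congr1 (@er _) (phiD (MkElt r 0 0 0) (MkElt r' 0 0 0)); rewrite !phi_diag.
have dD s s' : del (s + s') = del s + del s'.
  by have := congr1 (@es _) (phiD (MkElt 0 0 0 s) (MkElt 0 0 0 s')); rewrite !phi_diag.
have uD m m' : u (m + m') = u m + u m'.
  by have := congr1 (@em _) (phiD (MkElt 0 m 0 0) (MkElt 0 m' 0 0)); rewrite !phi_diag.
have vD n n' : v (n + n') = v n + v n'.
  by have := congr1 (@en _) (phiD (MkElt 0 0 n 0) (MkElt 0 0 n' 0)); rewrite !phi_diag.
have g0 := additive_map0 gD; have d0 := additive_map0 dD.
have u0 := additive_map0 uD; have v0 := additive_map0 vD.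
have phiM3 x y z : phi (mc_mul (mc_mul x y) z) = mc_mul (mc_mul (phi x) (phi y)) (phi z).
  by rewrite !phiM.
have [gb db ub vb] : [/\ bijective gam, bijective del, bijective u & bijective v].
  by apply/(diag_map_bij g0 d0 u0 v0); apply: (@eq_bij _ _ _ phib); apply: phi_diag.
have gM r r' : gam (r * r') = gam r * gam r'.
  have := congr1 (@er _) (phiM (MkElt r 0 0 0) (MkElt r' 0 0 0)).
  by rewrite !phi_diag /diag_map /mc_mul /= ?u0 ?v0 !zeroE.
have dM s s' : del (s * s') = del s * del s'.
  have := congr1 (@es _) (phiM (MkElt 0 0 0 s) (MkElt 0 0 0 s')).
  by rewrite !phi_diag /diag_map /mc_mul /= ?u0 ?v0 !zeroE.
have g1 : gam 1 = 1 by have := congr1 (@er _) phi1; rewrite phi_diag.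
have d1 : del 1 = 1 by have := congr1 (@es _) phi1; rewrite phi_diag.
have hu r m s : u (rM (lM r m) s) = lM (gam r) (rM (u m) (del s)).
  have := congr1 (@em _) (phiM3 (MkElt r 0 0 0) (MkElt 0 m 0 0) (MkElt 0 0 0 s)).
  by rewrite !phi_diag /diag_map /mc_mul /= ?g0 ?d0 ?u0 ?v0 !zeroE => ->; rewrite lrM.
have hv s n r : v (rN (lN s n) r) = lN (del s) (rN (v n) (gam r)).
  have := congr1 (@en _) (phiM3 (MkElt 0 0 0 s) (MkElt 0 0 n 0) (MkElt r 0 0 0)).
  by rewrite !phi_diag /diag_map /mc_mul /= ?g0 ?d0 ?u0 ?v0 !zeroE => ->; rewrite lrN.
have hb m n : brk (u m) (v n) = gam (brk m n).
  have := congr1 (@er _) (phiM (MkElt 0 m 0 0) (MkElt 0 0 n 0)).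
  by rewrite !phi_diag /diag_map /mc_mul /= ?g0 ?d0 ?u0 ?v0 !zeroE.
have hp m n : par (v n) (u m) = del (par n m).
  have := congr1 (@es _) (phiM (MkElt 0 0 n 0) (MkElt 0 m 0 0)).
  by rewrite !phi_diag /diag_map /mc_mul /= ?g0 ?d0 ?u0 ?v0 !zeroE.
exact: (conj (conj gb (conj gD (conj gM g1))) (conj (conj db (conj dD (conj dM d1)))
  (conj (conj ub uD) (conj (conj vb vD) (conj hu (conj hv (conj hb hp))))))).
Qed.

End DiagonalMaps.

(* A ring isomorphism fixing e11 and e22 respects the Peirce decomposition,
   hence acts entrywise. *)
Lemma mc_iso_corners (C C' : morita_context) (phi : mc_elt C -> mc_elt C') :
  (forall x y, phi (mc_mul x y) = mc_mul (phi x) (phi y)) ->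
  phi (e11 C) = e11 C' -> phi (e22 C) = e22 C' ->
  phi =1 diag_map (fun r => er (phi (MkElt r 0 0 0))) (fun s => es (phi (MkElt 0 0 0 s)))
                  (fun m => em (phi (MkElt 0 m 0 0))) (fun n => en (phi (MkElt 0 0 n 0))).
Proof.
move=> phiM phi_e11 phi_e22 x.
have corner a b : phi (mc_mul (mc_mul a x) b) = mc_mul (mc_mul (phi a) (phi x)) (phi b).
  by rewrite !phiM.
rewrite /diag_map /=.
have := corner (e11 C) (e11 C); rewrite phi_e11 !corner11 => ->.
have := corner (e11 C) (e22 C); rewrite phi_e11 phi_e22 !corner12 => ->.
have := corner (e22 C) (e11 C); rewrite phi_e11 phi_e22 !corner21 => ->.
have := corner (e22 C) (e22 C); rewrite phi_e22 !corner22 => ->.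
by case: (phi x).
Qed.

Definition par_unital (D : morita_context) : Prop :=
  exists k (n : 'I_k -> mcN D) (m : 'I_k -> mcM D), 1 = \sum_(i < k) par (n i) (m i).

(* Then an element m0 of M with [m0, N] = 0, or n0 of N with [M, n0] = 0,
   vanishes: m0 = m0 1 = sum m0 (n_i, m_i) = sum [m0, n_i] m_i = 0. *)
Lemma par_unital_annihilators (D : morita_context) : par_unital D ->
  (forall m0 : mcM D, (forall n, brk m0 n = 0) -> m0 = 0) /\
  (forall n0 : mcN D, (forall m, brk m n0 = 0) -> n0 = 0).
Proof.
move=> [k [n [m one_sum]]]; split.
- move=> m0 m0N; rewrite -(rM_one m0) one_sum.
  rewrite (big_morph (rM m0) (rM_addr m0) (rM0r m0)).
  by apply: big1 => i _; rewrite -mc_assoc1 m0N lM0l.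
- move=> n0 Mn0; rewrite -(lN_one n0) one_sum.
  rewrite (big_morph (fun s => lN s n0) (fun a b => lN_addl a b n0) (lN0l n0)).
  by apply: big1 => i _; rewrite -mc_assoc2 Mn0 rN0r.
Qed.

(* In the situation of Iso_0^0, strictness of either context makes S' unital
   for the pairing of C', transporting it along del when C is strict. *)
Lemma strict_par_unital (C C' : morita_context)
    (del : mcS C -> mcS C') (u : mcM C -> mcM C') (v : mcN C -> mcN C') :
  strict C \/ strict C' -> ring_iso del ->
  (forall m n, par (v n) (u m) = del (par n m)) -> par_unital C'.
Proof.
case=> [[_ unitS] | [_ unitS']] del_iso hp; last exact: unitS'.
have [k [n [m one_sum]]] := unitS 1.
have [_ [dD [_ d1]]] := del_iso.
exists k, (v \o n), (u \o m).
rewrite -d1 one_sum (big_morph del dD (ring_iso0 del_iso)).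
by apply: eq_bigr => i _; rewrite hp.
Qed.

Lemma Iso_0_0_diag (C C' : morita_context) (phi : mc_elt C -> mc_elt C') :
  strict C \/ strict C' -> Iso_0_0 phi ->
  exists gam del u v, diag_data gam del u v /\ phi =1 diag_map gam del u v.
Proof.
move=> hs [gam [del [u [v [m0 [n0 [hg [hd [hu [hv [h1 [h2
  [m0N [_ [Mn0 [_ [hb [hp hx]]]]]]]]]]]]]]]]]].
have [/(_ m0 m0N) m0_0 /(_ n0 Mn0) n0_0] :=
  par_unital_annihilators (strict_par_unital hs hd hp).
exists gam, del, u, v; split; first exact: (conj hg (conj hd (conj hu (conj hv
  (conj h1 (conj h2 (conj hb hp))))))).
by move=> x; rewrite hx m0_0 n0_0 /diag_map !zeroE.
Qed.

Lemma Iso_0_0_Iso_g (C C' : morita_context) (phi : mc_elt C -> mc_elt C') :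
  strict C \/ strict C' -> Iso_0_0 phi -> Iso_g phi.
Proof.
move=> hs /(Iso_0_0_diag hs) [gam [del [u [v [data phi_diag]]]]].
exact: diag_map_Iso_g phi_diag data.
Qed.

Lemma diag_Iso_0_0 (C C' : morita_context) (phi : mc_elt C -> mc_elt C')
    gam del u v :
  diag_data gam del u v -> phi =1 diag_map gam del u v -> Iso_0_0 phi.
Proof.
move=> [hg [hd [hu [hv [h1 [h2 [hb hp]]]]]]] hx.
exists gam, del, u, v, 0, 0.
do 6 (split; first by []).
do 4 (split; first by move=> ?; rewrite !zeroE).
by do 2 (split; first by []); move=> x; rewrite hx /diag_map !zeroE.
Qed.

Lemma Iso_0_0_of_e11 (C C' : morita_context) (phi : mc_elt C -> mc_elt C') :
  mc_ring_iso phi -> phi (e11 C) = e11 C' -> Iso_0_0 phi.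
Proof.
move=> phi_iso phi_e11; have [_ [_ [phiM _]]] := phi_iso.
have hx := mc_iso_corners phiM phi_e11 (mc_iso_e22 phi_iso phi_e11).
exact: diag_Iso_0_0 (diag_data_of_ring_iso hx phi_iso) hx.
Qed.

Definition diagonal (C : morita_context) (x : mc_elt C) : Prop :=
  em x = 0 /\ en x = 0.
Definition offdiagonal (C : morita_context) (x : mc_elt C) : Prop :=
  er x = 0 /\ es x = 0.
Definition block_preserving (C C' : morita_context) (phi : mc_elt C -> mc_elt C') :=
  (forall x, diagonal x -> diagonal (phi x)) /\
  (forall x, offdiagonal x -> offdiagonal (phi x)).

Lemma Iso_g_block_preserving (C C' : morita_context) (phi : mc_elt C -> mc_elt C') :
  Iso_g phi -> block_preserving phi.
Proof.
move=> [[_ [phiD _]] phi_gr].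
have deg (i : int) x : mc_hom i x -> mc_hom i (phi x) \/ mc_hom (- i) (phi x).
  by case: phi_gr => h hx; [left | right]; apply: h.
split=> [x /(deg 0)| x [xr xs]]; first by rewrite oppr0 => -[].
have off1 m : offdiagonal (phi (MkElt 0 m 0 0)).
  rewrite /offdiagonal.
  by case: (deg 1 (MkElt 0 m 0 0) (conj erefl (conj erefl erefl))) => -[-> [_ ->]].
have offm1 n : offdiagonal (phi (MkElt 0 0 n 0)).
  rewrite /offdiagonal.
  case: (deg (-1) (MkElt 0 0 n 0) (conj erefl (conj erefl erefl))).
    by case=> -> [_ ->].
  by rewrite opprK => -[-> [_ ->]].
have -> : x = mc_add (MkElt 0 (em x) 0 0) (MkElt 0 0 (en x) 0).
  by case: x xr xs => r m n s /= -> ->; rewrite /mc_add /= !addr0 add0r.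
rewrite phiD; have [r1 s1] := off1 (em x); have [r2 s2] := offm1 (en x).
by rewrite /offdiagonal /mc_add /= r1 s1 r2 s2 !addr0.
Qed.

Section CentralIdempotent.
Variables (C C' : morita_context) (phi : mc_elt C -> mc_elt C').
Hypotheses (phi_iso : mc_ring_iso phi) (phi_block : block_preserving phi).

Lemma block_diag_onto z : diagonal z -> exists2 d, diagonal d & phi d = z.
Proof.
have [[g _ gK] [phiD _]] := phi_iso.
case: z => r m n s [/= -> ->].
move: (gK (MkElt r 0 0 s)); move: (g _) => y.
have [dm dn] := phi_block.1 (MkElt (er y) 0 0 (es y)) (conj erefl erefl).
have [or os] := phi_block.2 (MkElt 0 (em y) (en y) 0) (conj erefl erefl).
have -> : y = mc_add (MkElt (er y) 0 0 (es y)) (MkElt 0 (em y) (en y) 0).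
  by case: y {dm dn or os} => r' m' n' s'; rewrite /mc_add /= !addr0 !add0r.
rewrite phiD => phiy; exists (MkElt (er y) 0 0 (es y)) => //; move: phiy dm dn or os.
case: (phi (MkElt _ 0 0 _)) => r1 m1 n1 s1; case: (phi (MkElt 0 _ _ 0)) => r2 m2 n2 s2.
by rewrite /mc_add /= => -[<- _ _ <-] -> -> -> ->; rewrite !addr0.
Qed.

Lemma e11_image : indecomposable (mcR C') -> indecomposable (mcS C') ->
  phi (e11 C) = e11 C' \/ phi (e11 C) = e22 C'.
Proof.
move=> indecR indecS; have [_ [_ [phiM phi1]]] := phi_iso.
have [a [b phi_e11]] : exists a b, phi (e11 C) = MkElt a 0 0 b.
  have [] := phi_block.1 (e11 C) (conj erefl erefl).
  by case: (phi (e11 C)) => r m n s /= -> ->; exists r, s.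
have [a_idem b_idem] : a * a = a /\ b * b = b.
  have := phiM (e11 C) (e11 C); rewrite e11_idem phi_e11 /mc_mul /= !zeroE.
  by case=> <- <-.
(* e11 commutes with the diagonal, and phi maps the diagonal onto that of T' *)
have central z : diagonal z -> mc_mul (MkElt a 0 0 b) z = mc_mul z (MkElt a 0 0 b).
  case/block_diag_onto => -[r m n s] [/= -> ->] <-; rewrite -phi_e11 -!phiM.
  by congr phi; rewrite /e11 /mc_mul /= !zeroE.
have a_central x : a * x = x * a.
  have := congr1 (@er _) (central (MkElt x 0 0 0) (conj erefl erefl)).
  by rewrite /mc_mul /= !zeroE.
have b_central x : b * x = x * b.
  have := congr1 (@es _) (central (MkElt 0 0 0 x) (conj erefl erefl)).
  by rewrite /mc_mul /= !zeroE.
have [a0|a1] := indecR a a_idem a_central.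
all: have [b0|b1] := indecS b b_idem b_central.
- suff : e11 C = mc_zero C by move/(congr1 (@er _))/eqP; rewrite oner_eq0.
  by apply: (mc_iso_inj phi_iso); rewrite mc_iso_zero // phi_e11 a0 b0.
- by right; rewrite phi_e11 a0 b1.
- by left; rewrite phi_e11 a1 b0.
- suff : e11 C = mc_one C by move/(congr1 (@es _))/eqP; rewrite eq_sym oner_eq0.
  by apply: (mc_iso_inj phi_iso); rewrite phi1 phi_e11 a1 b1.
Qed.

End CentralIdempotent.

(* The transposed context (S, R, N, M), with the roles of the two pairings
   exchanged; its context ring is isomorphic to T by transposition. *)
Definition swap_context (C : morita_context) : morita_context := {|
  mcR := mcS C; mcS := mcR C; mcM := mcN C; mcN := mcM C;
  lM := @lN C; rM := @rN C; lN := @lM C; rN := @rM C;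
  brk := @par C; par := @brk C;
  lM_addl := @lN_addl C; lM_addr := @lN_addr C; lM_mul := @lN_mul C;
  lM_one := @lN_one C; rM_addl := @rN_addl C; rM_addr := @rN_addr C;
  rM_mul := @rN_mul C; rM_one := @rN_one C; lrM := @lrN C;
  lN_addl := @lM_addl C; lN_addr := @lM_addr C; lN_mul := @lM_mul C;
  lN_one := @lM_one C; rN_addl := @rM_addl C; rN_addr := @rM_addr C;
  rN_mul := @rM_mul C; rN_one := @rM_one C; lrN := @lrM C;
  brk_addl := @par_addl C; brk_addr := @par_addr C; brk_bal := @par_bal C;
  brk_lin_l := @par_lin_l C; brk_lin_r := @par_lin_r C;
  par_addl := @brk_addl C; par_addr := @brk_addr C; par_bal := @brk_bal C;
  par_lin_l := @brk_lin_l C; par_lin_r := @brk_lin_r C;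
  mc_assoc1 := fun n m n' => esym (@mc_assoc2 C n m n');
  mc_assoc2 := fun m n m' => esym (@mc_assoc1 C m n m') |}.

Definition swap_elt (C : morita_context) (x : mc_elt C) : mc_elt (swap_context C) :=
  @MkElt (swap_context C) (es x) (en x) (em x) (er x).
Definition unswap_elt (C : morita_context) (x : mc_elt (swap_context C)) : mc_elt C :=
  @MkElt C (es x) (en x) (em x) (er x).

Section Swap.
Variable C : morita_context.
Implicit Types x y : mc_elt C.

Lemma swap_eltK : cancel (@swap_elt C) (@unswap_elt C).
Proof. by case. Qed.
Lemma unswap_eltK : cancel (@unswap_elt C) (@swap_elt C).
Proof. by case. Qed.

Lemma swap_add x y : swap_elt (mc_add x y) = mc_add (swap_elt x) (swap_elt y).
Proof. by []. Qed.
Lemma swap_mul x y : swap_elt (mc_mul x y) = mc_mul (swap_elt x) (swap_elt y).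
Proof.
case: x => r m n s; case: y => r' m' n' s'; rewrite /swap_elt /mc_mul /=.
by congr MkElt; rewrite addrC.
Qed.
Lemma swap_one : swap_elt (mc_one C) = mc_one (swap_context C).
Proof. by []. Qed.

Lemma mc_hom_swap (i : int) x : mc_hom i (swap_elt x) <-> mc_hom (- i) x.
Proof.
rewrite /mc_hom oppr_eq0 !eqr_oppLR opprK; case: x => r m n s.
have [_|_] := eqVneq i 0; first by split=> -[].
have [->|_] := eqVneq i 1; first by split=> -[? [? ?]].
have [_|_] := eqVneq i (-1); first by split=> -[? [? ?]].
by split=> -[-> -> -> ->].
Qed.

Lemma strict_swap : strict (swap_context C) <-> strict C.
Proof. by split=> -[unitR unitS]; split. Qed.

End Swap.

Section SwapTarget.
Variables (C C' : morita_context) (phi : mc_elt C -> mc_elt C').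

Lemma mc_ring_iso_swap : mc_ring_iso (@swap_elt C' \o phi) <-> mc_ring_iso phi.
Proof.
have swap_inj := can_inj (@swap_eltK C').
split=> [[sb [sD [sM s1]]] | [phib [phiD [phiM phi1]]]].
  have unswap_bij := Bijective (@unswap_eltK C') (@swap_eltK C').
  split; first by apply: (@eq_bij _ _ _ (bij_comp unswap_bij sb)) => x /=;
    rewrite swap_eltK.
  split; first by move=> x y; apply: swap_inj; rewrite swap_add; exact: sD.
  split; first by move=> x y; apply: swap_inj; rewrite swap_mul; exact: sM.
  by apply: swap_inj; rewrite swap_one; exact: s1.
split; first exact: bij_comp (Bijective (@swap_eltK C') (@unswap_eltK C')) phib.
by split=> [x y|]; [|split=> [x y|]]; rewrite /= ?phiD ?phiM ?phi1 ?swap_add ?swap_mul.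
Qed.

Lemma Iso_g_swap : Iso_g (@swap_elt C' \o phi) <-> Iso_g phi.
Proof.
have gr : graded (@swap_elt C' \o phi) <-> antigraded phi.
  by split=> h i x /h; [move/mc_hom_swap | move=> hx; apply/mc_hom_swap].
have ag : antigraded (@swap_elt C' \o phi) <-> graded phi.
  split=> h i x /h; first by move/mc_hom_swap; rewrite opprK.
  by move=> hx; apply/mc_hom_swap; rewrite opprK.
split=> -[iso gr_or]; (split; first exact/mc_ring_iso_swap).
  by case: gr_or => [/gr|/ag]; [right|left].
by case: gr_or => [/ag|/gr]; [right|left].
Qed.

Lemma Iso_0_1_swap : Iso_0_1 phi <-> Iso_0_0 (@swap_elt C' \o phi).
Proof.
split.
  move=> [rho [sig [mu [nu [ms [ns [hr [hs [hmu [hnu [h1 [h2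
    [a1 [a2 [a3 [a4 [hb [hp hx]]]]]]]]]]]]]]]]]].
  exists rho, sig, mu, nu, ns, ms.
  do 12 (split; first by []).
  by move=> x; rewrite /= hx.
move=> [gam [del [u [v [m0 [n0 [hg [hd [hu [hv [h1 [h2
  [a1 [a2 [a3 [a4 [hb [hp hx]]]]]]]]]]]]]]]]]].
exists gam, del, u, v, n0, m0.
do 12 (split; first by []).
by move=> x; rewrite -[phi x]swap_eltK; have /= -> := hx x.
Qed.

End SwapTarget.

Theorem corollary3p9 (C C' : morita_context) :
  indecomposable (mcR C) -> indecomposable (mcS C) ->
  indecomposable (mcR C') -> indecomposable (mcS C') ->
  strict C \/ strict C' ->
  forall phi : mc_elt C -> mc_elt C', Iso_g phi <-> Iso_0 phi.
Proof.
(* only the indecomposability of the target rings R', S' is needed *)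
move=> _ _ indecR' indecS' hs phi; split=> [phi_g | [phi_0 | /Iso_0_1_swap phi_0]].
- have [phi_iso _] := phi_g.
  case: (e11_image phi_iso (Iso_g_block_preserving phi_g) indecR' indecS') => phi_e11.
    by left; exact: Iso_0_0_of_e11 phi_iso phi_e11.
  (* phi exchanges the diagonal blocks: transpose the target *)
  right; apply/Iso_0_1_swap; apply: Iso_0_0_of_e11; first exact/mc_ring_iso_swap.
  by rewrite /= phi_e11.
- exact: Iso_0_0_Iso_g hs phi_0.
- apply/Iso_g_swap; apply: Iso_0_0_Iso_g phi_0.
  by case: hs => h; [left | right; apply/strict_swap].
Qed.
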